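(* Let $x$ and $y$ be finite sequences of strings and $\lambda\ge0$. The tree $T^\ast$ built by $\textsc{BuildBifurcation}(x,y,\lambda)$ satisfies $\mathrm{error}_\lambda(T^\ast)\le\mathsf{EDG}(x,y,\lambda)$.
   Context: Strings are over a finite alphabet; $\varepsilon$ is the empty string and $\mathsf{ED}$ is Levenshtein edit distance (unit costs). $\mathsf{AED}(x,y)$ for string sequences is the minimum cost of transforming $x$ into $y$ using only inserting a string $w$ into $x$ (cost $\mathsf{ED}(w,\varepsilon)$) and substituting a string $w$ of $x$ by $w'$ (cost $\mathsf{ED}(w,w')$), with no deletions (defined only if $|x|\le|y|$). A labeled summary tree of $\{x,y\}$ is a rooted tree with a sentinel root, other nodes labeled by strings, with $x$ and $y$ assigned to nodes $v_x,v_y$; $L_T(v)$ is the label sequence on the root-to-$v$ path excluding the sentinel; $|T|$ counts non-sentinel nodes; $\mathrm{error}_\lambda(T)=\mathsf{AED}(x,L_T(v_x))+\mathsf{AED}(y,L_T(v_y))+\lambda|T|$. $\mathsf{EDG}(i,j,\lambda)$ ($1\le i\le|x|+1$, $1\le j\le|y|+1$): $\mathsf{EDG}(|x|+1,|y|+1,\lambda)=0$, $\mathsf{EDG}(i,|y|+1,\lambda)=\lambda(|x|-i+1)$, $\mathsf{EDG}(|x|+1,j,\lambda)=\lambda(|y|-j+1)$, and otherwise the minimum of $\mathsf{EDG}(i+1,j+1,\lambda)+\lambda+\mathsf{ED}(x_i,y_j)$, $\mathsf{EDG}(i,j+1,\lambda)+\lambda+\mathsf{ED}(\varepsilon,y_j)$,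 $\mathsf{EDG}(i+1,j,\lambda)+\lambda+\mathsf{ED}(x_i,\varepsilon)$, and $\lambda(|x|-i+1)+\lambda(|y|-j+1)$ (give up); $\mathsf{EDG}(x,y,\lambda)=\mathsf{EDG}(1,1,\lambda)$. $\textsc{BuildBifurcation}(x,y,\lambda)$ builds a tree recursively following an optimal choice in this recurrence: both empty gives the empty tree; insertion of $y_1$ (or $x$ empty) gives a node labeled $y_1$ above $\textsc{BuildBifurcation}(x,y_{2..|y|},\lambda)$; deletion of $x_1$ (or $y$ empty) gives a node labeled $x_1$ above $\textsc{BuildBifurcation}(x_{2..|x|},y,\lambda)$; substitution gives a node labeled $x_1$ above $\textsc{BuildBifurcation}(x_{2..|x|},y_{2..|y|},\lambda)$; give up places two disjoint paths labeled successively by the remaining strings of $x$ and of $y$. The sequence $x$ (resp. $y$) is mapped to the node created for its last string. *)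

From Stdlib Require Import ClassicalEpsilon.
From mathcomp Require Import all_boot all_order all_algebra.
Set Implicit Arguments. Unset Strict Implicit. Unset Printing Implicit Defensive.
Import Order.TTheory GRing.Theory Num.Theory.
Local Open Scope ring_scope.

Section Defs.
Variable A : finType.
Notation str := (seq A).
Notation strs := (seq (seq A)).

Fixpoint ED (s : str) : str -> nat :=
  match s with
  | [::] => fun t => size t
  | a :: s' => fix g (t : str) : nat :=
      match t with
      | [::] => size s
      | b :: t' => minn (minn (ED s' t' + (a != b)) (g t' + 1)) (ED s' t + 1)
      end
  end.

Inductive aed_step : strs -> strs -> nat -> Prop :=
| aed_ins (x : strs) (i : nat) (w : str) : (i <= size x)%N ->
    aed_step x (take i x ++ w :: drop i x) (ED w [::])
| aed_sub (x : strs) (i : nat) (w' : str) : (i < size x)%N ->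
    aed_step x (set_nth [::] x i w') (ED (nth [::] x i) w').

Inductive aed_reach : strs -> strs -> nat -> Prop :=
| aed_refl x : aed_reach x x 0
| aed_trans x z y c1 c2 : aed_step x z c1 -> aed_reach z y c2 ->
    aed_reach x y (c1 + c2).

Definition aedb (x y : strs) (c : nat) : bool :=
  if excluded_middle_informative (aed_reach x y c) then true else false.

Lemma aedb_ex x y : (exists c, aed_reach x y c) -> exists c, aedb x y c.
Proof.
case=> c Hc; exists c; rewrite /aedb.
by case: (excluded_middle_informative _).
Qed.

(* AED(x,y): minimum cost of such a transformation (0 if undefined,
   i.e. if no transformation exists, which happens iff |x| > |y|). *)
Definition AED (x y : strs) : nat :=
  match excluded_middle_informative (exists c, aed_reach x y c) with
  | left H => ex_minn (aedb_ex H)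
  | right _ => 0%N
  end.

(* Rooted labeled trees; the sentinel root is implicit: a labeled summary
   tree is a forest (children of the sentinel) plus the addresses of v_x and
   v_y (sequences of child indices from the sentinel; [::] = sentinel). *)
Inductive tree := Node of str & seq tree.

Definition dflt_tree := Node [::] [::].

(* label sequence L_T(v) along the root-to-v path, excluding the sentinel *)
Fixpoint lab (F : seq tree) (p : seq nat) : strs :=
  match p with
  | [::] => [::]
  | i :: p' => let: Node l ch := nth dflt_tree F i in l :: lab ch p'
  end.

Fixpoint tsize (t : tree) : nat :=
  let: Node _ ch := t in
  ((fix fsize (F : seq tree) : nat :=
     match F with [::] => 0%N | t :: F' => (tsize t + fsize F')%N end) ch).+1.

Definition fsize (F : seq tree) : nat := \sum_(t <- F) tsize t.

Record stree := STree { forest : seq tree; vx : seq nat; vy : seq nat }.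

Definition error (R : realFieldType) (lam : R) (x y : strs) (T : stree) : R :=
  (AED x (lab (forest T) (vx T)))%:R + (AED y (lab (forest T) (vy T)))%:R
  + lam * (fsize (forest T))%:R.

Variable R : realFieldType.

(* EDG on suffixes: EDG x y lam = EDG(1,1,lam) for sequences x, y *)
Fixpoint EDG (lam : R) (x : strs) : strs -> R :=
  match x with
  | [::] => fun y => lam * (size y)%:R
  | a :: x' => fix g (y : strs) : R :=
      match y with
      | [::] => lam * (size x)%:R
      | b :: y' =>
          Num.min (Num.min (EDG lam x' y' + lam + (ED a b)%:R)
                           (g y' + lam + (ED [::] b)%:R))
                  (Num.min (EDG lam x' (b :: y') + lam + (ED a [::])%:R)
                           (lam * (size x)%:R + lam * (size y)%:R))
      end
  end.

Fixpoint path_of (l : strs) : seq tree :=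
  match l with [::] => [::] | w :: l' => [:: Node w (path_of l')] end.

(* build lam x y T : T is a tree that BuildBifurcation(x,y,lam) can output,
   following an optimal choice of the recurrence (any optimal choice in
   case of ties). *)
Inductive build (lam : R) : strs -> strs -> stree -> Prop :=
| b_nil : build lam [::] [::] (STree [::] [::] [::])
| b_ins_empty b y' F px py : build lam [::] y' (STree F px py) ->
    build lam [::] (b :: y') (STree [:: Node b F] [::] (0%N :: py))
| b_del_empty a x' F px py : build lam x' [::] (STree F px py) ->
    build lam (a :: x') [::] (STree [:: Node a F] (0%N :: px) [::])
| b_ins a x' b y' F px py :
    EDG lam (a :: x') y' + lam + (ED [::] b)%:R = EDG lam (a :: x') (b :: y') ->
    build lam (a :: x') y' (STree F px py) ->
    build lam (a :: x') (b :: y') (STree [:: Node b F] (0%N :: px) (0%N :: py))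
| b_del a x' b y' F px py :
    EDG lam x' (b :: y') + lam + (ED a [::])%:R = EDG lam (a :: x') (b :: y') ->
    build lam x' (b :: y') (STree F px py) ->
    build lam (a :: x') (b :: y') (STree [:: Node a F] (0%N :: px) (0%N :: py))
| b_sub a x' b y' F px py :
    EDG lam x' y' + lam + (ED a b)%:R = EDG lam (a :: x') (b :: y') ->
    build lam x' y' (STree F px py) ->
    build lam (a :: x') (b :: y') (STree [:: Node a F] (0%N :: px) (0%N :: py))
| b_giveup a x' b y' :
    lam * (size (a :: x'))%:R + lam * (size (b :: y'))%:R
      = EDG lam (a :: x') (b :: y') ->
    build lam (a :: x') (b :: y')
      (STree (path_of (a :: x') ++ path_of (b :: y'))
             (0%N :: nseq (size x') 0%N) (1%N :: nseq (size y') 0%N)).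

End Defs.

(* Each step of BuildBifurcation adds one node, paid for by lam, labeled by a
   string w, and the recurrence branch it follows pays for making w
   the next label on the root paths of x and of y: the side that already
   begins with w keeps it for free, the other side inserts w (cost ED w "")
   or substitutes its first string by w (cost ED of the two strings).
   By induction on the construction, x and y are therefore transformed into
   their root-path label sequences by explicit AED transformations whose
   costs, plus lam |T|, add up to at most EDG; and AED is at most the cost
   of any transformation. *)
From mathcomp Require Import all_boot all_order all_algebra.
From mathcomp Require Import lra.
From Stdlib Require Import ClassicalEpsilon.
Import Order.TTheory GRing.Theory Num.Theory.
Local Open Scope ring_scope.

Set Implicit Arguments.

Section EditDistance.
Variable A : finType.
Implicit Types (s t : seq A) (x y z : seq (seq A)).

Lemma ED_nil_r s : ED s [::] = size s.
Proof. by case: s. Qed.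

Lemma ED_cons (a b : A) s t : ED (a :: s) (b :: t) =
  minn (minn (ED s t + (a != b)) (ED (a :: s) t + 1)) (ED s (b :: t) + 1).
Proof. by []. Qed.

Lemma ED_sym s t : ED s t = ED t s.
Proof.
elim: s t => [|a s IHs] t; first by rewrite ED_nil_r.
elim: t => [|b t IHt]; first by rewrite ED_nil_r.
by rewrite !ED_cons IHs IHt (IHs (b :: t)) eq_sym -!minnA [X in minn _ X]minnC.
Qed.

Lemma aed_step_cons w x z c : aed_step x z c -> aed_step (w :: x) (w :: z) c.
Proof.
case=> {x z c} [x i u le_i | x i u lt_i].
  exact: (@aed_ins A (w :: x) i.+1 u le_i).
exact: (@aed_sub A (w :: x) i.+1 u lt_i).
Qed.

Lemma aed_reach_cons w x y c : aed_reach x y c -> aed_reach (w :: x) (w :: y) c.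
Proof.
elim=> {x y c} [x | x z y c1 c2 xz _ IH]; first exact: aed_refl.
exact: aed_trans (aed_step_cons w xz) IH.
Qed.

Lemma aed_reach_ins w x y c : aed_reach x y c ->
  aed_reach x (w :: y) (ED w [::] + c).
Proof.
move=> xy; apply: aed_trans (aed_reach_cons w xy).
by have := @aed_ins A x 0 w (leq0n _); rewrite take0 drop0.
Qed.

Lemma aed_reach_sub v w x y c : aed_reach x y c ->
  aed_reach (v :: x) (w :: y) (ED v w + c).
Proof.
move=> xy; apply: aed_trans (aed_reach_cons w xy).
exact: (@aed_sub A (v :: x) 0 w (ltn0Sn _)).
Qed.

Lemma AED_le x y c : aed_reach x y c -> (AED x y <= c)%N.
Proof.
move=> xy; rewrite /AED; case: excluded_middle_informative => // reach.
case: ex_minnP => m _; apply.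
by rewrite /aedb; case: excluded_middle_informative.
Qed.

End EditDistance.

Section SummaryTrees.
Variable A : finType.
Implicit Types (w : seq A) (l : seq (seq A)) (F G : seq (tree A)).

Lemma fsize_cons w F G : fsize (Node w F :: G) = (fsize F + fsize G).+1.
Proof.
rewrite /fsize big_cons /= addSn; congr (_ + _).+1.
by elim: F => [|t F IH]; rewrite ?big_nil // big_cons IH.
Qed.

Lemma fsize_seq1 w F : fsize [:: Node w F] = (fsize F).+1.
Proof. by rewrite fsize_cons /fsize big_nil addn0. Qed.

Lemma fsize_path_of l : fsize (path_of l) = size l.
Proof.
by elim: l => [|w l IH] /=; [rewrite /fsize big_nil | rewrite fsize_seq1 IH].
Qed.

Lemma lab_path_of l G : lab (path_of l ++ G) (nseq (size l) 0%N) = l.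
Proof. by elim: l G => [|w l IH] G //=; rewrite -(cats0 (path_of l)) IH. Qed.

End SummaryTrees.

Section Bifurcation.
Variables (A : finType) (R : realFieldType) (lam : R).
Implicit Types (a b w : seq A) (x y : seq (seq A)) (F : seq (tree A)).

Lemma EDG_nil_r x : EDG lam x [::] = lam * (size x)%:R.
Proof. by case: x. Qed.

Definition cost_within x y (T : stree A) (e : R) :=
  exists c1 c2, [/\ aed_reach x (lab (forest T) (vx T)) c1,
    aed_reach y (lab (forest T) (vy T)) c2 &
    c1%:R + c2%:R + lam * (fsize (forest T))%:R <= e].

Lemma cost_within_le x y T e e' :
  cost_within x y T e -> e <= e' -> cost_within x y T e'.
Proof.
case=> c1 [c2 [xT yT le_e]] le_e'.
by exists c1, c2; split => //; apply: le_trans le_e'.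
Qed.

Lemma cost_within_node x y x' y' w F px py e d1 d2 :
  cost_within x' y' (STree F px py) e ->
  (forall l c, aed_reach x' l c -> aed_reach x (w :: l) (d1 + c)) ->
  (forall l c, aed_reach y' l c -> aed_reach y (w :: l) (d2 + c)) ->
  cost_within x y (STree [:: Node w F] (0%N :: px) (0%N :: py))
    (e + lam + d1%:R + d2%:R).
Proof.
case=> c1 [c2 [xT yT /= le_e]] ext_x ext_y.
exists (d1 + c1)%N, (d2 + c2)%N; split; [exact: ext_x | exact: ext_y |].
rewrite /= fsize_seq1 -addn1 !natrD mulrDr mulr1; lra.
Qed.

Lemma build_cost_within x y T :
  build lam x y T -> cost_within x y T (EDG lam x y).
Proof.
elim=> {x y T}.
- exists 0%N, 0%N; split; try exact: aed_refl.
  by rewrite /fsize big_nil /= !mulr0 !addr0.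
- move=> b y' F px py _ [c1 [c2 [_ y'T le_e]]].
  exists 0%N, c2; split; [exact: aed_refl | exact: aed_reach_cons |].
  have c1_ge0 : 0 <= c1%:R :> R by rewrite ler0n.
  rewrite /= fsize_seq1 -addn1 !natrD /= mulrDr mulr1 in le_e *; lra.
- move=> a x' F px py _ [c1 [c2 [x'T _ le_e]]].
  exists c1, 0%N; split; [exact: aed_reach_cons | exact: aed_refl |].
  have c2_ge0 : 0 <= c2%:R :> R by rewrite ler0n.
  rewrite EDG_nil_r /= in le_e; rewrite EDG_nil_r.
  rewrite /= fsize_seq1 -addn1 !natrD /= mulrDr mulr1; lra.
- move=> a x' b y' F px py opt _ IH.
  apply: cost_within_le (cost_within_node _ 0 IH
    (@aed_reach_ins _ b _) (@aed_reach_cons _ b _)) _.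
  by rewrite addr0 [ED b _]ED_sym opt.
- move=> a x' b y' F px py opt _ IH.
  apply: cost_within_le (cost_within_node 0 _ IH
    (@aed_reach_cons _ a _) (@aed_reach_ins _ a _)) _.
  by rewrite addr0 opt.
- move=> a x' b y' F px py opt _ IH.
  apply: cost_within_le (cost_within_node 0 _ IH
    (@aed_reach_cons _ a _) (@aed_reach_sub _ b a _)) _.
  by rewrite addr0 [ED b _]ED_sym opt.
- move=> a x' b y' opt; exists 0%N, 0%N; split.
  + by rewrite /= -(cats0 (path_of x')) lab_path_of; apply: aed_refl.
  + by rewrite /= -(cats0 (path_of y')) lab_path_of; apply: aed_refl.
  + rewrite -opt /fsize big_cat -!/(fsize _) !fsize_path_of natrD /=.
    by rewrite mulrDr !add0r.
Qed.

End Bifurcation.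

Theorem lemma9 (A : finType) (R : realFieldType) (lam : R)
    (x y : seq (seq A)) (T : stree A) :
  0 <= lam -> build lam x y T -> error lam x y T <= EDG lam x y.
Proof.
move=> _ /build_cost_within [c1 [c2 [xT yT le_e]]].
rewrite /error; apply: le_trans le_e.
by rewrite lerD2r lerD // ler_nat; apply: AED_le.
Qed.
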